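(* Let $q$ be an odd prime power, $g\ge 1$, $X,T$ positive integers, and let $\mathcal{Y}$ be a hyperelliptic curve of genus $g$ over $\mathbb{F}_{q^2}$ with affine equation $y^2=f(x)$, $f(x)=x^{2g+1}+a_{2g}x^{2g}+\dots+a_0\in\mathbb{F}_{q^2}[x]$. Let $J^{\mathcal{Y}}_{\max}$ be the largest integer $J$ for which there exist pairwise distinct $\lambda_1,\dots,\lambda_J\in\mathbb{F}_{q^2}$ with $f(\lambda_j)\ne0$ such that, with $h=\prod_{j=1}^J(x-\lambda_j)$, $\mathcal{Y}$ has at least $2J+X+T+6g+2$ affine $\mathbb{F}_{q^2}$-rational points $P$ with $y(P)\ne 0$, $h(P)\ne 0$, and put $\mathcal{R}^{\mathcal{Y}}_{\max}=\frac{2J^{\mathcal{Y}}_{\max}-g}{2J^{\mathcal{Y}}_{\max}+X+T+5g+2}$. Let $$\mathcal{R}^{\mathcal{H}_q}_{\max}=\frac{L}{L+X+T+3q^2-q-2},\qquad L=mq-\frac{q(q-1)}{2},\quad m=\left\lfloor\frac{q^3-3q^2+q+1-(X+T)}{2q}\right\rfloor.$$ Then $\mathcal{R}^{\mathcal{H}_q}_{\max}>\mathcal{R}^{\mathcal{Y}}_{\max}$ if one of the following holds: (i) $X+T\ge 3(2q+3)$, $g=1$ and $q>31$; (ii) $X+T\ge 3(2q+3)$, $g>1$ and $q>5$.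
   Context: $\mathcal{R}^{\mathcal{Y}}_{\max}$ is the maximal rate of the known $X$-secure $T$-private PIR construction from hyperelliptic curves over $\mathbb{F}_{q^2}$ (rate $L/N$ with $L=2J-g$, $N=L+X+T+6g+2$), and $\mathcal{R}^{\mathcal{H}_q}_{\max}$ is the maximal rate of the PIR construction from the Hermitian curve $X^{q+1}=Y^q+Y$ over $\mathbb{F}_{q^2}$. *)

From HB Require Import structures.
From mathcomp Require Import all_boot all_order all_algebra all_field.
Set Implicit Arguments. Unset Strict Implicit. Unset Printing Implicit Defensive.
Import Order.TTheory GRing.Theory Num.Theory.
Local Open Scope ring_scope.

Definition good_points (F : finFieldType) (f h : {poly F}) : {set F * F} :=
  [set P : F * F | [&& P.2 ^+ 2 == f.[P.1], P.2 != 0 & h.[P.1] != 0]].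

Definition admissibleJ (F : finFieldType) (f : {poly F}) (g X T J : nat) : Prop :=
  exists s : seq F,
    [/\ uniq s, size s = J, all (fun l => f.[l] != 0) s &
        (2 * J + X + T + 6 * g + 2 <=
           #|good_points f (\prod_(l <- s) ('X - l%:P))|)%N].

Definition rateY (g X T J : nat) : rat :=
  ((2 * J)%:R - g%:R) / (2 * J + X + T + 5 * g + 2)%:R.

Definition mH (q X T : nat) : int :=
  (((q ^ 3 + q + 1)%:Z - (3 * q ^ 2 + X + T)%:Z) %/ (2 * q)%:Z)%Z.

Definition LH (q X T : nat) : int :=
  mH q X T * q%:Z - ((q * (q - 1)) %/ 2)%N%:Z.

Definition rateH (q X T : nat) : rat :=
  (LH q X T)%:~R /
  (LH q X T + (X + T + 3 * q ^ 2)%:Z - (q + 2)%:Z)%:~R.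

From HB Require Import structures.
From mathcomp Require Import all_boot all_order all_algebra all_field.
From mathcomp Require Import zify ring.
Import Order.TTheory GRing.Theory Num.Theory.
Set Implicit Arguments. Unset Strict Implicit. Unset Printing Implicit Defensive.
Local Open Scope ring_scope.

(* A rational point with y <> 0 and h(x) <> 0 lies over one of the q^2 - J
   non-roots x of h, and over each such x at most two y satisfy y^2 = f(x); so
   an admissible J satisfies 4J + X + T + 6g + 2 <= 2q^2, which bounds the
   numerator 2J - g of R^Y.  On the Hermitian side the floor in m costs little:
   2L >= q^3 - 4q^2 + 2 - (X + T).  Cross-multiplying, R^Y < R^H reduces to a
   polynomial inequality in q, g and S = X + T which is increasing in S; at the
   smallest allowed S = 6q + 9 it reads
   q^3 - 31q^2 - 7q + 14 + (g - 1)(6q^3 + 4q + 14) > 0,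
   true for q >= 32 if g = 1 and for q >= 7 if g >= 2. *)

Lemma card_sqr_eq_le2 (F : finIdomainType) (c : F) :
  (#|[set y : F | y ^+ 2 == c]| <= 2)%N.
Proof.
have [/eqP -> | /set0Pn [y0]] := boolP ([set y : F | y ^+ 2 == c] == set0).
  by rewrite cards0.
rewrite inE => /eqP <-.
apply: leq_trans (_ : #|[set y0; - y0]| <= 2)%N; last by rewrite cards2; case: (_ != _).
by apply/subset_leq_card/subsetP => y; rewrite !inE eqf_sqr.
Qed.

Lemma card_good_points_le (F : finFieldType) (f h : {poly F}) :
  (#|good_points f h| <= 2 * #|[set x | ~~ root h x]|)%N.
Proof.
rewrite -sum1_card (partition_big fst (mem [set x | ~~ root h x])) /=; last first.
  by move=> P; rewrite !inE => /and3P[_ _ ->].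
rewrite mulnC -sum_nat_const; apply: leq_sum => x _.
rewrite sum1_card; apply: leq_trans (card_sqr_eq_le2 f.[x]).
apply: leq_trans (leq_imset_card (pair x) _).
apply/subset_leq_card/subsetP => -[x' y]; rewrite unfold_in /= inE.
case/andP => /and3P[/= /eqP sq _ _] /eqP <-.
by apply/imsetP; exists y; rewrite // inE sq.
Qed.

Lemma card_nonroots_prod_XsubC (F : finFieldType) (s : seq F) : uniq s ->
  #|[set x | ~~ root (\prod_(l <- s) ('X - l%:P)) x]| = (#|F| - size s)%N.
Proof.
move=> s_uniq.
have -> : [set x | ~~ root (\prod_(l <- s) ('X - l%:P)) x] = ~: [set x in s].
  by apply/setP => x; rewrite !inE root_prod_XsubC.
by rewrite cardsCs setCK cardsE (card_uniqP s_uniq).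
Qed.

Lemma admissibleJ_card_le (F : finFieldType) (f : {poly F}) (g X T J : nat) :
  admissibleJ f g X T J -> (4 * J + X + T + 6 * g + 2 <= 2 * #|F|)%N.
Proof.
case=> s [s_uniq <- _ many_points].
have := leq_trans many_points (card_good_points_le f _).
by rewrite card_nonroots_prod_XsubC //; lia.
Qed.

Lemma LH_lower_bound (q X T : nat) : (0 < q)%N ->
  q%:Z ^+ 3 - 4 * q%:Z ^+ 2 + 2 - (X + T)%:Z <= 2 * LH q X T.
Proof.
move=> q_gt0; rewrite /LH /mH.
set N := (q ^ 3 + q + 1)%:Z - _.
have d_neq0 : (2 * q)%:Z != 0 by lia.
have := divz_eq N (2 * q)%:Z; have := modz_ge0 N d_neq0; have := ltz_mod N d_neq0.
have := leq_divM (q * (q - 1)) 2.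
lia.
Qed.

Lemma cubic_gap_gt0 (q g : int) : 7 <= q -> 1 <= g -> (g = 1 -> 32 <= q) ->
  0 < q ^+ 3 - 31 * q ^+ 2 - 7 * q + 14 + (g - 1) * (6 * q ^+ 3 + 4 * q + 14).
Proof. by move=> *; nia. Qed.

Lemma rate_gap_lt (q g S : int) :
  7 <= q -> 1 <= g -> (g = 1 -> 32 <= q) -> 6 * q + 9 <= S ->
  (2 * q ^+ 2 - S - 8 * g - 2) * (S + 3 * q ^+ 2 - q - 2)
    < (q ^+ 3 - 4 * q ^+ 2 + 2 - S) * (S + 6 * g + 2).
Proof.
move=> q_ge7 g_ge1 q_ge32 S_ge; rewrite -subr_gt0.
set c := q ^+ 3 - 3 * q ^+ 2 - q + 2 * g.
set C := 2 * (q ^+ 2 - g) * (3 * q ^+ 2 - q - 4 - 6 * g).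
have -> : (q ^+ 3 - 4 * q ^+ 2 + 2 - S) * (S + 6 * g + 2)
    - (2 * q ^+ 2 - S - 8 * g - 2) * (S + 3 * q ^+ 2 - q - 2)
    = (S + 6 * g + 2) * c - C by rewrite /c /C; ring.
have at_S_min : (6 * q + 11 + 6 * g) * c - C
    = q ^+ 3 - 31 * q ^+ 2 - 7 * q + 14 + (g - 1) * (6 * q ^+ 3 + 4 * q + 14).
  by rewrite /c /C; ring.
have c_ge0 : 0 <= c by rewrite /c; nia.
have mono : (6 * q + 11 + 6 * g) * c <= (S + 6 * g + 2) * c.
  by rewrite ler_wpM2r //; lia.
have := cubic_gap_gt0 q_ge7 g_ge1 q_ge32.
lia.
Qed.

Lemma cubic_lower_bound_gt0 (q S L : int) :
  7 <= q -> S <= 2 * q ^+ 2 -> q ^+ 3 - 4 * q ^+ 2 + 2 - S <= 2 * L -> 0 < L.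
Proof. by move=> *; nia. Qed.

Lemma rate_cross_lt (q g S J L : int) :
  7 <= q -> 1 <= g -> (g = 1 -> 32 <= q) -> 6 * q + 9 <= S -> 0 <= J ->
  4 * J + S + 6 * g + 2 <= 2 * q ^+ 2 -> q ^+ 3 - 4 * q ^+ 2 + 2 - S <= 2 * L ->
  (2 * J - g) * (L + S + 3 * q ^+ 2 - q - 2) < L * (2 * J + S + 5 * g + 2).
Proof.
move=> q_ge7 g_ge1 q_ge32 S_ge J_ge0 J_le L_ge.
have L_gt0 : 0 < L by apply: cubic_lower_bound_gt0 L_ge; lia.
suff : (2 * J - g) * (S + 3 * q ^+ 2 - q - 2) < L * (S + 6 * g + 2) by lia.
have K_gt0 : 0 < S + 3 * q ^+ 2 - q - 2 by nia.
have [a_le0 | a_gt0] := lerP (2 * J - g) 0; first by nia.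
have := rate_gap_lt q_ge7 g_ge1 q_ge32 S_ge.
have : 2 * (2 * J - g) * (S + 3 * q ^+ 2 - q - 2)
         <= (2 * q ^+ 2 - S - 8 * g - 2) * (S + 3 * q ^+ 2 - q - 2).
  by rewrite ler_pM2r //; lia.
have : (q ^+ 3 - 4 * q ^+ 2 + 2 - S) * (S + 6 * g + 2) <= 2 * L * (S + 6 * g + 2).
  by rewrite ler_pM2r //; lia.
lia.
Qed.

Lemma ltr_frac_int (R : numFieldType) (a b c d : int) :
  0 < b -> 0 < d -> a * d < c * b -> a%:~R / b%:~R < c%:~R / d%:~R :> R.
Proof.
move=> b_gt0 d_gt0 lt_ad_cb.
by rewrite ltr_pdivrMr ?ltr0z // mulrAC ltr_pdivlMr ?ltr0z // -!intrM ltr_int.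
Qed.

Theorem proposition4p9
  (q p k : nat) (F : finFieldType) (g X T : nat) (f : {poly F}) (J : nat) :
  prime p -> (0 < k)%N -> q = (p ^ k)%N -> odd q ->
  #|F| = (q ^ 2)%N ->
  (1 <= g)%N -> (0 < X)%N -> (0 < T)%N ->
  f \is monic -> size f = (2 * g + 2)%N -> separable_poly f ->
  admissibleJ f g X T J ->
  (forall J' : nat, admissibleJ f g X T J' -> (J' <= J)%N) ->
  (3 * (2 * q + 3) <= X + T)%N ->
  ((g == 1%N) && (31 < q)%N) || ((1 < g)%N && (5 < q)%N) ->
  rateY g X T J < rateH q X T.
Proof.
move=> _ _ _ q_odd card_F g_ge1 _ _ _ _ _ /admissibleJ_card_le + _ S_ge q_large.
rewrite card_F => J_le.
have q_ge7 : (7 <= q)%N.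
  have q_ne6 : q != 6%N by apply: contraTneq q_odd => ->.
  by case/orP: q_large => /andP[_]; lia.
have q_ge32 : g = 1%N -> (32 <= q)%N by move=> g1; move: q_large; rewrite g1; lia.
have L_ge := @LH_lower_bound q X T (leq_trans (isT : 0 < 7)%N q_ge7).
have := @cubic_lower_bound_gt0 q (X + T) (LH q X T).
have := @rate_cross_lt q g (X + T) J (LH q X T).
rewrite /rateY /rateH !pmulrn -intrB => cross_lt L_gt0.
by apply: ltr_frac_int; lia.
Qed.
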